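(* Let $W\in\mathbb{R}^{k\times k}$ and $\alpha\in(0,\gamma_2(W))$. There is $\ell\in\mathbb{N}$ with $\ell\lesssim\frac{\gamma_2(W)^2\log k}{\alpha^2}$ such that $\gamma_2^\ell(W;\alpha)\lesssim\gamma_2(W)$ (where $\lesssim$ means up to a universal constant factor).
   Context: $\|A\|_{1\to2}$ is the maximum Euclidean column norm, $\|A\|_\infty$ the maximum absolute entry. $\gamma_2(W)=\min_{L^TR=W}\|L\|_{1\to2}\|R\|_{1\to2}$ over matrices $L,R$ with any number of rows; $\gamma_2^\ell(W)$ is the same minimum restricted to $L,R\in\mathbb{R}^{\ell\times k}$; $\gamma_2^\ell(W;\alpha)=\min_{\|\tilde W-W\|_\infty\le\alpha}\gamma_2^\ell(\tilde W)$. *)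

From HB Require Import structures.
From mathcomp Require Import all_boot all_order all_algebra.
From mathcomp Require Import all_classical all_reals all_analysis.
Set Implicit Arguments. Unset Strict Implicit. Unset Printing Implicit Defensive.
Import Order.TTheory GRing.Theory Num.Theory.
Local Open Scope classical_set_scope.
Local Open Scope ring_scope.

Definition norm12 {R : realType} {m n : nat} (A : 'M[R]_(m, n)) : R :=
  \big[Num.max/0]_(j < n) Num.sqrt (\sum_(i < m) A i j ^+ 2).

(* gamma_2(W): infimum over factorizations L^T R = W with any number l of rows.
   The set is nonempty (l = k, L = 1, R = W) and bounded below by 0. *)
Definition gamma2 {R : realType} {k : nat} (W : 'M[R]_k) : R :=
  inf [set x : R | exists (l : nat) (L Rm : 'M[R]_(l, k)),
         L^T *m Rm = W /\ x = norm12 L * norm12 Rm].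

(* gamma_2^l(W): same, restricted to l rows; +oo if no such factorization. *)
Definition gamma2l {R : realType} {k : nat} (l : nat) (W : 'M[R]_k) : \bar R :=
  ereal_inf [set x : \bar R | exists (L Rm : 'M[R]_(l, k)),
         L^T *m Rm = W /\ x = (norm12 L * norm12 Rm)%:E].

Definition gamma2la {R : realType} {k : nat} (l : nat) (W : 'M[R]_k) (a : R) : \bar R :=
  ereal_inf [set gamma2l l Wt | Wt in
     [set Wt : 'M[R]_k | forall i j, `|Wt i j - W i j| <= a]].

From HB Require Import structures.
From mathcomp Require Import all_boot all_order all_algebra.
From mathcomp Require Import all_classical all_reals all_analysis.
From mathcomp Require Import ring lra.
Import Order.TTheory GRing.Theory Num.Theory.
Local Open Scope ring_scope.

(* Factor W = L^T R with |L|_{1->2} |R|_{1->2} < 2 gamma_2(W) and rescale the columns of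
   L and R into the unit ball of R^d.  For uniform random signs s, the Rademacher sums
   <s, u> satisfy E <s,u><s,v> = <u,v> and E <s,u>^4 <= 3 |u|^4, so cutting them off at
   height (24/del)^(1/2) makes them bounded while moving E <s,u><s,v> by at most del/2.
   A Bernstein bound on the moment generating function of an average of l independent
   copies, with a union bound over the (2k)^2 pairs of columns, shows that for l of order
   ln k / del^2 some l sign vectors reproduce every <u,v> within del.  With
   del = alpha / (2 gamma_2(W)), the rescaled sketches factor a matrix alpha-close to W
   through l rows, with column norms at most sqrt 2 times the original ones.
   Expectations are averages [mean] over the finite space of sign vectors. *)

Lemma sum_mul_delta (R : pzSemiRingType) (T : finType) (p : T) (F : T -> R) :
  \sum_q F q * (p == q)%:R = F p.
Proof.
rewrite (bigD1 p) //= eqxx mulr1 big1 ?addr0 // => q.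
by rewrite eq_sym => /negbTE ->; rewrite mulr0.
Qed.

Section Averages.
Context {R : realFieldType}.

Definition mean {T : finType} (f : T -> R) : R := (\sum_s f s) / #|T|%:R.

Lemma normrM_le_mean_sqr (x y : R) : `|x * y| <= (x ^+ 2 + y ^+ 2) / 2.
Proof.
rewrite ler_norml; have := sqr_ge0 (x - y); have := sqr_ge0 (x + y).
by rewrite !expr2 => *; apply/andP; split; nra.
Qed.

Lemma sqrM_le_mean_pow4 (x y : R) : x ^+ 2 * y ^+ 2 <= (x ^+ 4 + y ^+ 4) / 2.
Proof. by have := sqr_ge0 (x ^+ 2 - y ^+ 2); rewrite (_ : 4 = 2 * 2)%N // !exprM; lra. Qed.

Lemma norm_mean_le [T : finType] [f : T -> R] [B : R] :
  (0 < #|T|)%N -> (forall s, `|f s| <= B) -> `|mean f| <= B.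
Proof.
move=> T0 fB; rewrite normrM normfV normr_nat ler_pdivrMr ?ltr0n //.
apply: le_trans (ler_norm_sum _ _ _) _.
by apply: le_trans (ler_sum _ (fun s _ => fB s)) _; rewrite sumr_const mulr_natr.
Qed.

Lemma sum_sub_mean [T : finType] [f : T -> R] :
  (0 < #|T|)%N -> \sum_s (f s - mean f) = 0.
Proof.
move=> T0; rewrite sumrB sumr_const /mean -mulr_natl.
by field; rewrite pnatr_eq0 -lt0n.
Qed.

Lemma mean_subr [T : finType] (f : T -> R) (m : R) :
  (0 < #|T|)%N -> mean (fun s => f s - m) = mean f - m.
Proof.
move=> T0; rewrite /mean sumrB sumr_const -mulr_natl.
by field; rewrite pnatr_eq0 -lt0n.
Qed.

Lemma meanN [T : finType] (f : T -> R) : mean (fun s => - f s) = - mean f.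
Proof. by rewrite /mean sumrN mulNr. Qed.

Lemma sum_sqr_sub_mean_le [T : finType] [f : T -> R] :
  (0 < #|T|)%N -> \sum_s (f s - mean f) ^+ 2 <= \sum_s f s ^+ 2.
Proof.
move=> T0; have mean_sq : 0 <= #|T|%:R * mean f ^+ 2 by rewrite mulr_ge0 ?sqr_ge0.
suff -> : \sum_s (f s - mean f) ^+ 2 = \sum_s f s ^+ 2 - #|T|%:R * mean f ^+ 2 by lra.
have sum_f : \sum_s f s = #|T|%:R * mean f.
  by rewrite /mean mulrC divfK // pnatr_eq0 -lt0n.
rewrite (eq_bigr (fun s => f s ^+ 2 + - (2 * mean f) * f s + mean f ^+ 2)); last first.
  by move=> s _; ring.
by rewrite !big_split /= -mulr_sumr sum_f sumr_const -mulr_natl; ring.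
Qed.

Lemma exists_lt1_of_sum_lt_card [T : finType] [G : T -> R] :
  \sum_s G s < #|T|%:R -> exists s, G s < 1.
Proof.
move=> lt_card; apply/existsP; apply: contraTT lt_card => /existsPn ge1.
rewrite -leNgt -sum1_card natr_sum ler_sum // => s _.
by rewrite leNgt; exact: ge1.
Qed.

Definition cutoff (tau x : R) : R := if x ^+ 2 <= tau then x else 0.

Lemma cutoff_sqr_le (tau x : R) : cutoff tau x ^+ 2 <= x ^+ 2.
Proof. by rewrite /cutoff; case: ifP => // _; rewrite expr0n sqr_ge0. Qed.

Lemma cutoff_sqr_le_tau (tau x : R) : 0 <= tau -> cutoff tau x ^+ 2 <= tau.
Proof. by rewrite /cutoff; case: ifP => // _; rewrite expr0n. Qed.

Lemma normrM_le_of_large (tau x y : R) : 0 < tau -> tau < x ^+ 2 ->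
  `|x * y| <= 2 * (x ^+ 4 + y ^+ 4) / tau.
Proof.
move=> tau0 large; rewrite ler_pdivlMr //.
apply: le_trans (ler_wpM2r (ltW tau0) (normrM_le_mean_sqr x y)) _.
have hx : tau * x ^+ 2 <= x ^+ 4.
  by rewrite (_ : 4 = 2 + 2)%N // exprD ler_wpM2r ?sqr_ge0 ?(ltW large).
have hy : tau * y ^+ 2 <= x ^+ 2 * y ^+ 2 by rewrite ler_wpM2r ?sqr_ge0 ?(ltW large).
have := sqrM_le_mean_pow4 x y; have := exprn_even_ge0 x (isT : ~~ odd 4).
have := exprn_even_ge0 y (isT : ~~ odd 4); lra.
Qed.

Lemma cutoffM_err (tau x y : R) : 0 < tau ->
  `|x * y - cutoff tau x * cutoff tau y| <= 2 * (x ^+ 4 + y ^+ 4) / tau.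
Proof.
move=> tau0; rewrite /cutoff; case: ifP => hx; case: ifP => hy.
- rewrite subrr normr0 divr_ge0 ?(ltW tau0) //.
  by rewrite mulr_ge0 ?addr_ge0 ?exprn_even_ge0.
- by rewrite mulr0 subr0 mulrC addrC normrM_le_of_large // ltNge hy.
- by rewrite mul0r subr0 normrM_le_of_large // ltNge hx.
- by rewrite mul0r subr0 normrM_le_of_large // ltNge hx.
Qed.

End Averages.

Section Rademacher.
Context {R : realFieldType} {d : nat}.

Local Notation signs := {ffun 'I_d -> bool}.
Local Notation N := (#|signs|%:R : R).

Lemma card_signs_gt0 : (0 < #|signs|)%N.
Proof. by rewrite card_ffun card_bool expn_gt0. Qed.

Definition flip_sign (a : 'I_d) (s : signs) : signs :=
  [ffun i => if i == a then ~~ s i else s i].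

Lemma flip_signK a : involutive (flip_sign a).
Proof. by move=> s; apply/ffunP=> i; rewrite !ffunE; case: eqP; rewrite ?negbK. Qed.

Lemma sign_flip_sign a s : (-1) ^+ flip_sign a s a = - (-1) ^+ s a :> R.
Proof. by rewrite ffunE eqxx signrN. Qed.

Lemma flip_sign_neq a b s : b != a -> flip_sign a s b = s b.
Proof. by rewrite ffunE => /negbTE ->. Qed.

Lemma sum_flip_odd a (g : signs -> R) :
  (forall s, g (flip_sign a s) = - g s) -> \sum_s g s = 0.
Proof.
move=> gN; have : \sum_s g s = - \sum_s g s.
  rewrite {1}(reindex_inj (inv_inj (flip_signK a))) /= -sumrN.
  by apply: eq_bigr => s _; rewrite gN.
by move/eqP; rewrite -addr_eq0 -mulr2n mulrn_eq0 => /eqP.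
Qed.

Lemma sum_sign2 a b :
  \sum_(s : signs) (-1) ^+ s a * (-1) ^+ s b = N * (a == b)%:R :> R.
Proof.
have [<-|ne] := eqVneq a b.
  by rewrite mulr1 (eq_bigr (fun=> 1)) ?sumr_const // => s _; rewrite -expr2 sqrr_sign.
rewrite mulr0; apply: (sum_flip_odd a) => s.
by rewrite sign_flip_sign flip_sign_neq 1?eq_sym // mulNr.
Qed.

(* The three pairings of (a, b, c, e) all count the case a = b = c = e. *)
Lemma sum_sign4 a b c e :
  \sum_(s : signs) (-1) ^+ s a * (-1) ^+ s b * (-1) ^+ s c * (-1) ^+ s e =
  N * (((a, b) == (c, e))%:R + ((b, a) == (c, e))%:R
       + (a == b)%:R * (c == e)%:R - 2 * [&& a == b, a == c & a == e]%:R) :> R.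
Proof.
have sgK (x : bool) : (-1) ^+ x * (-1) ^+ x = 1 :> R by rewrite -expr2 sqrr_sign.
have [<-|nab] := eqVneq a b.
  under eq_bigr do rewrite sgK mul1r.
  by rewrite sum_sign2 !xpair_eqE /=; ring.
have [<-|nac] := eqVneq a c.
  under eq_bigr do rewrite [X in X * _]mulrAC sgK mul1r.
  by rewrite sum_sign2 !xpair_eqE /= eqxx (eq_sym b a) (negbTE nab) /=; ring.
have [<-|nae] := eqVneq a e.
  under eq_bigr do rewrite mulrC !mulrA sgK mul1r.
  by rewrite sum_sign2 !xpair_eqE /= (negbTE nac) eqxx andbT /=; ring.
rewrite !xpair_eqE (negbTE nac) (negbTE nae) /= andbF (sum_flip_odd a) => [|s /=].
  by rewrite !(mul0r, mulr0, add0r, addr0, subr0, mulr0n, oppr0).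
by rewrite sign_flip_sign !flip_sign_neq 1?eq_sym //; ring.
Qed.

Definition radsum (u : 'I_d -> R) (s : signs) : R := \sum_a (-1) ^+ s a * u a.

Lemma sum_radsumM u v :
  \sum_s radsum u s * radsum v s = N * \sum_a u a * v a.
Proof.
rewrite /radsum; under eq_bigr do rewrite big_distrlr /=.
rewrite exchange_big /=; under eq_bigr do rewrite exchange_big /=.
rewrite mulr_sumr; apply: eq_bigr => a _.
under eq_bigr => b _.
  rewrite (eq_bigr (fun s : signs => u a * v b * ((-1) ^+ s a * (-1) ^+ s b))); last first.
    by move=> s _; ring.
  rewrite -mulr_sumr sum_sign2.
  over.
rewrite /= (eq_bigr (fun b => N * (u a * v b) * (a == b)%:R)) ?sum_mul_delta // => b _.
by ring.
Qed.

Lemma sqr_sum_pairs (F : 'I_d -> R) :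
  (\sum_a F a) ^+ 2 = \sum_(p : 'I_d * 'I_d) F p.1 * F p.2.
Proof. by rewrite expr2 big_distrlr /= pair_big. Qed.

Lemma sum_radsum4 u : \sum_s radsum u s ^+ 4 =
  N * \sum_(p : 'I_d * 'I_d) \sum_(q : 'I_d * 'I_d) u p.1 * u p.2 * u q.1 * u q.2 *
    ((p == q)%:R + ((p.2, p.1) == q)%:R + (p.1 == p.2)%:R * (q.1 == q.2)%:R
     - 2 * [&& p.1 == p.2, p.1 == q.1 & p.1 == q.2]%:R).
Proof.
under eq_bigr do rewrite (_ : 4 = 2 * 2)%N // exprM /radsum sqr_sum_pairs expr2 big_distrlr /=.
rewrite exchange_big mulr_sumr /=; apply: eq_bigr => p _.
rewrite exchange_big mulr_sumr /=; apply: eq_bigr => q _.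
rewrite (eq_bigr (fun s : signs => u p.1 * u p.2 * u q.1 * u q.2 *
   ((-1) ^+ s p.1 * (-1) ^+ s p.2 * (-1) ^+ s q.1 * (-1) ^+ s q.2))) => [|s _]; last by ring.
by rewrite -mulr_sumr sum_sign4; ring.
Qed.

Lemma sum_radsum4_le u : \sum_s radsum u s ^+ 4 <= 3 * N * (\sum_a u a ^+ 2) ^+ 2.
Proof.
set S2 := \sum_a u a ^+ 2.
pose u4 (p q : 'I_d * 'I_d) := u p.1 * u p.2 * u q.1 * u q.2.
pose pairs (w : 'I_d * 'I_d -> 'I_d * 'I_d -> R) := \sum_p \sum_q u4 p q * w p q.
have -> : \sum_s radsum u s ^+ 4 =
    N * (pairs (fun p q => (p == q)%:R) + pairs (fun p q => ((p.2, p.1) == q)%:R)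
         + pairs (fun p q => (p.1 == p.2)%:R * (q.1 == q.2)%:R)
         - 2 * pairs (fun p q => [&& p.1 == p.2, p.1 == q.1 & p.1 == q.2]%:R)).
  rewrite sum_radsum4 /pairs; congr (_ * _).
  rewrite mulr_sumr -!big_split /= -sumrN -big_split /=; apply: eq_bigr => p _.
  rewrite mulr_sumr -!big_split /= -sumrN -big_split /=.
  by apply: eq_bigr => q _; rewrite /u4; ring.
have -> : pairs (fun p q => (p == q)%:R) = S2 ^+ 2.
  by rewrite sqr_sum_pairs; apply: eq_bigr => p _; rewrite sum_mul_delta /u4; ring.
have -> : pairs (fun p q => ((p.2, p.1) == q)%:R) = S2 ^+ 2.
  by rewrite sqr_sum_pairs; apply: eq_bigr => p _; rewrite sum_mul_delta /u4 /=; ring.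
have -> : pairs (fun p q => (p.1 == p.2)%:R * (q.1 == q.2)%:R) = S2 ^+ 2.
  have sum_diag : \sum_(p : 'I_d * 'I_d) u p.1 * u p.2 * (p.1 == p.2)%:R = S2.
    rewrite -(pair_big xpredT xpredT (fun a b => u a * u b * (a == b)%:R)) /=.
    by apply: eq_bigr => a _; rewrite sum_mul_delta expr2.
  rewrite -sum_diag expr2 big_distrl /=; apply: eq_bigr => p _.
  by rewrite big_distrr /=; apply: eq_bigr => q _; rewrite /u4; ring.
have : 0 <= pairs (fun p q => [&& p.1 == p.2, p.1 == q.1 & p.1 == q.2]%:R).
  apply: sumr_ge0 => -[a b] _; apply: sumr_ge0 => -[c e] _ /=.
  have [<-|] := eqVneq a b; have [<-|] := eqVneq a c; have [<-|] := eqVneq a e => //= *;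
    rewrite ?mulr0 ?mulr1 /u4 //=.
  nra.
have N0 : 0 <= N by rewrite ler0n.
nra.
Qed.

Lemma sum_radsum4_le_unit [u : 'I_d -> R] :
  \sum_a u a ^+ 2 <= 1 -> \sum_s radsum u s ^+ 4 <= 3 * N.
Proof.
move=> u1; apply: le_trans (sum_radsum4_le u) _.
have S0 : 0 <= \sum_a u a ^+ 2 by apply: sumr_ge0 => a _; apply: sqr_ge0.
have N0 : 0 <= N by rewrite ler0n.
have : (\sum_a u a ^+ 2) ^+ 2 <= 1 by rewrite expr_le1.
nra.
Qed.

Lemma cutoff_radsum_bias [tau] [u v : 'I_d -> R] : 0 < tau ->
  \sum_a u a ^+ 2 <= 1 -> \sum_a v a ^+ 2 <= 1 ->
  `|mean (fun s => cutoff tau (radsum u s) * cutoff tau (radsum v s))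
    - \sum_a u a * v a| <= 12 / tau.
Proof.
move=> tau0 u1 v1.
have N0 : 0 < N by rewrite ltr0n card_signs_gt0.
have err : `|\sum_s (radsum u s * radsum v s
                     - cutoff tau (radsum u s) * cutoff tau (radsum v s))| <= 12 * N / tau.
  apply: le_trans (ler_norm_sum _ _ _) _.
  apply: le_trans (ler_sum _ (fun s _ => cutoffM_err tau (radsum u s) (radsum v s) tau0)) _.
  rewrite -mulr_suml -mulr_sumr big_split /= ler_wpM2r ?invr_ge0 ?(ltW tau0) //.
  by have := sum_radsum4_le_unit u1; have := sum_radsum4_le_unit v1; lra.
have -> : mean (fun s => cutoff tau (radsum u s) * cutoff tau (radsum v s))
          - \sum_a u a * v a
        = - (\sum_s (radsum u s * radsum v s
                     - cutoff tau (radsum u s) * cutoff tau (radsum v s))) / N.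
  by rewrite /mean sumrB sum_radsumM; field; rewrite gt_eqF.
rewrite normrM normrN normfV normr_nat ler_pdivrMr //.
by apply: le_trans err _; rewrite mulrAC.
Qed.

Lemma cutoff_radsum_var [tau] [u v : 'I_d -> R] :
  \sum_a u a ^+ 2 <= 1 -> \sum_a v a ^+ 2 <= 1 ->
  \sum_s (cutoff tau (radsum u s) * cutoff tau (radsum v s)) ^+ 2 <= 3 * N.
Proof.
move=> u1 v1.
have pt s : (cutoff tau (radsum u s) * cutoff tau (radsum v s)) ^+ 2
            <= (radsum u s ^+ 4 + radsum v s ^+ 4) / 2.
  apply: le_trans (sqrM_le_mean_pow4 _ _).
  by rewrite exprMn ler_pM ?sqr_ge0 ?cutoff_sqr_le.
apply: le_trans (ler_sum _ (fun s _ => pt s)) _.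
rewrite -mulr_suml big_split /=.
by have := sum_radsum4_le_unit u1; have := sum_radsum4_le_unit v1; lra.
Qed.

End Rademacher.

Section Concentration.
Context {R : realType}.

Lemma expR_ge1 (y : R) : 0 <= y -> 1 <= expR y.
Proof. by move=> y0; have := expR_ge1Dx y; lra. Qed.

Lemma expR_le_quad (y : R) : y <= 1 / 2 -> expR y <= 1 + y + 2 * y ^+ 2.
Proof.
move=> y_le; have ey := expR_gt0 y.
have inv : expR y * expR (- y) = 1 by rewrite -expRD subrr expR0.
have h1 : expR y * (1 - y) <= 1.
  by rewrite -[X in _ <= X]inv ler_wpM2l ?(ltW ey) // expR_ge1Dx.
have h2 : 1 <= (1 + y + 2 * y ^+ 2) * (1 - y) by nra.
by rewrite -(ler_pM2r (_ : 0 < 1 - y)) ?(le_trans h1 h2) //; lra.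
Qed.

(* Bernstein-type bound: expR y <= 1 + y + 2 y^2 below 1/2, the linear term averages
   out, and the quadratic one is controlled by the second moment. *)
Lemma mgf_centered_le [T : finType] [Z : T -> R] [B V t c : R] :
  (0 < #|T|)%N -> (forall s, `|Z s| <= B) -> \sum_s Z s ^+ 2 <= V * #|T|%:R ->
  0 <= t -> t * (2 * B) <= 1 / 2 ->
  \sum_s expR (t * (Z s - mean Z - c)) <= #|T|%:R * expR (2 * t ^+ 2 * V - t * c).
Proof.
move=> T0 ZB ZV t0 tB; set m := mean Z.
have dev_le s : t * (Z s - m) <= 1 / 2.
  apply: le_trans tB; rewrite ler_wpM2l //; apply: le_trans (ler_norm _) _.
  apply: le_trans (ler_normB _ _) _; have := ZB s; have := norm_mean_le T0 ZB; lra.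
have pt s : expR (t * (Z s - m - c))
    <= expR (- (t * c)) * (1 + t * (Z s - m) + 2 * t ^+ 2 * (Z s - m) ^+ 2).
  rewrite (_ : t * (Z s - m - c) = t * (Z s - m) + - (t * c)); last by ring.
  rewrite expRD mulrC ler_wpM2l ?expR_ge0 //.
  by rewrite -mulrA -exprMn; exact: expR_le_quad.
apply: le_trans (ler_sum _ (fun s _ => pt s)) _.
have sum_const (x : R) : \sum_(s : T) x = #|T|%:R * x by rewrite sumr_const mulr_natl.
rewrite -mulr_sumr !big_split /= -!mulr_sumr (sum_sub_mean T0) sum_const mulr0 addr0 mulr1.
have var := le_trans (sum_sqr_sub_mean_le T0) ZV.
have grow := expR_ge1Dx (2 * t ^+ 2 * V).
have t2 : 0 <= 2 * t ^+ 2 by rewrite mulr_ge0 ?sqr_ge0.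
have N0 : 0 <= #|T|%:R :> R by rewrite ler0n.
rewrite expRD mulrA [X in _ <= X]mulrC ler_wpM2l ?expR_ge0 //.
nra.
Qed.

Lemma mgf_sample_le [T : finType] (l : nat) [Z : T -> R] [B V t c : R] :
  (0 < #|T|)%N -> (forall s, `|Z s| <= B) -> \sum_s Z s ^+ 2 <= V * #|T|%:R ->
  0 <= t -> t * (2 * B) <= 1 / 2 ->
  \sum_(S : {ffun 'I_l -> T}) expR (t * \sum_r (Z (S r) - mean Z - c))
    <= #|T|%:R ^+ l * expR (l%:R * (2 * t ^+ 2 * V - t * c)).
Proof.
move=> T0 ZB ZV t0 tB.
under eq_bigr do rewrite mulr_sumr expR_sum.
rewrite -(bigA_distr_bigA (fun _ s => expR (t * (Z s - mean Z - c)))) /=.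
rewrite prodr_const card_ord expRM_natl -exprMn; apply: lerXn2r; rewrite ?nnegrE.
- by apply: sumr_ge0 => s _; apply: expR_ge0.
- by rewrite mulr_ge0 ?ler0n ?expR_ge0.
- exact: mgf_centered_le.
Qed.

Lemma mgf_sample_two_sided_le [T : finType] (l : nat) [Z : T -> R] [B V t c : R] :
  (0 < #|T|)%N -> (forall s, `|Z s| <= B) -> \sum_s Z s ^+ 2 <= V * #|T|%:R ->
  0 <= t -> t * (2 * B) <= 1 / 2 ->
  \sum_(S : {ffun 'I_l -> T})
      (expR (t * (\sum_r (Z (S r) - mean Z) - l%:R * c))
       + expR (t * (- \sum_r (Z (S r) - mean Z) - l%:R * c)))
    <= 2 * (#|T|%:R ^+ l * expR (l%:R * (2 * t ^+ 2 * V - t * c))).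
Proof.
move=> T0 ZB ZV t0 tB; rewrite big_split /= [X in _ <= X](mulr_natl _ 2) mulr2n.
apply: lerD.
- rewrite (eq_bigr (fun S : {ffun 'I_l -> T} =>
    expR (t * \sum_r (Z (S r) - mean Z - c)))) => [|S _].
    exact: mgf_sample_le.
  by rewrite [in RHS]sumrB sumr_const card_ord mulr_natl.
- rewrite (eq_bigr (fun S : {ffun 'I_l -> T} =>
    expR (t * \sum_r (- Z (S r) - mean (fun s => - Z s) - c)))) => [|S _].
    apply: (mgf_sample_le (Z := fun s => - Z s) (B := B) l T0) => // [s|].
      by rewrite normrN.
    by under eq_bigr do rewrite sqrrN.
  rewrite meanN [in RHS]sumrB sumr_const card_ord mulr_natl -sumrN.
  by under eq_bigr do rewrite opprD.
Qed.

Lemma exists_sample_near_mean [T J : finType] (l : nat) [Z : J -> T -> R] [B V t c : R] :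
  (0 < #|T|)%N -> (0 < l)%N -> (forall j s, `|Z j s| <= B) ->
  (forall j, \sum_s Z j s ^+ 2 <= V * #|T|%:R) -> 0 <= t -> t * (2 * B) <= 1 / 2 ->
  2 * #|J|%:R * expR (l%:R * (2 * t ^+ 2 * V - t * c)) < 1 ->
  exists S : {ffun 'I_l -> T}, forall j, `|mean (fun r => Z j (S r)) - mean (Z j)| <= c.
Proof.
move=> T0 l0 ZB ZV t0 tB small; set e := expR _ in small.
pose D (S : {ffun 'I_l -> T}) j := \sum_r (Z j (S r) - mean (Z j)).
pose F S j := expR (t * (D S j - l%:R * c)) + expR (t * (- D S j - l%:R * c)).
(* F S j >= 1 as soon as |D S j| > l c, while the F S j sum to less than #|T| ^ l. *)
have [S FS] : exists S, \sum_j F S j < 1.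
  apply: exists_lt1_of_sum_lt_card; rewrite card_ffun card_ord natrX exchange_big /=.
  apply: le_lt_trans (ler_sum _ (fun j _ =>
    mgf_sample_two_sided_le l (c := c) T0 (ZB j) (ZV j) t0 tB)) _.
  have Nl : 0 < #|T|%:R ^+ l :> R by rewrite exprn_gt0 ?ltr0n.
  have sum_const (x : R) : \sum_(j : J) x = #|J|%:R * x by rewrite sumr_const mulr_natl.
  by rewrite sum_const -/e; nra.
exists S => j.
have Fj : F S j < 1.
  apply: le_lt_trans FS; rewrite (bigD1 j) //= lerDl.
  by apply: sumr_ge0 => i _; rewrite addr_ge0 ?expR_ge0.
have dev : `|D S j| <= l%:R * c.
  rewrite leNgt; apply/negP; rewrite ltr_normr => /orP[] dev_gt.
  - have : 1 <= expR (t * (D S j - l%:R * c)) by apply/expR_ge1/mulr_ge0 => //; lra.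
    by have := expR_ge0 (t * (- D S j - l%:R * c)); rewrite /F in Fj; lra.
  - have : 1 <= expR (t * (- D S j - l%:R * c)) by apply/expR_ge1/mulr_ge0 => //; lra.
    by have := expR_ge0 (t * (D S j - l%:R * c)); rewrite /F in Fj; lra.
rewrite -mean_subr ?card_ord // {1}/mean card_ord normrM normfV normr_nat.
by rewrite ler_pdivrMr ?ltr0n // mulrC.
Qed.

End Concentration.

Section Factorizations.
Context {R : realType}.

Lemma trmx_mulmxE [m n p] (A : 'M[R]_(m, n)) (B : 'M[R]_(m, p)) i j :
  (A^T *m B) i j = \sum_r A r i * B r j.
Proof. by rewrite mxE; apply: eq_bigr => r _; rewrite mxE. Qed.

Lemma gram_diag [m n] (A : 'M[R]_(m, n)) j : (A^T *m A) j j = \sum_i A i j ^+ 2.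
Proof. by rewrite trmx_mulmxE; under eq_bigr do rewrite -expr2. Qed.

Lemma norm12_ge0 [m n] (A : 'M[R]_(m, n)) : 0 <= norm12 A.
Proof. by apply: (big_ind (fun x : R => 0 <= x)) => // x y x0 y0; rewrite le_max x0. Qed.

Lemma col_sqr_le_norm12 [m n] (A : 'M[R]_(m, n)) j : \sum_i A i j ^+ 2 <= norm12 A ^+ 2.
Proof.
have S0 : 0 <= \sum_i A i j ^+ 2 by apply: sumr_ge0 => i _; apply: sqr_ge0.
rewrite -(sqr_sqrtr S0); apply: lerXn2r; rewrite ?nnegrE ?sqrtr_ge0 ?norm12_ge0 //.
exact: (le_bigmax 0 (fun j => Num.sqrt (\sum_i A i j ^+ 2)) j).
Qed.

Lemma norm12_le [m n] (A : 'M[R]_(m, n)) c :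
  0 <= c -> (forall j, \sum_i A i j ^+ 2 <= c ^+ 2) -> norm12 A <= c.
Proof.
move=> c0 colA; apply: bigmax_le => // j _.
by rewrite -(ger0_norm c0) -sqrtr_sqr ler_sqrt ?sqr_ge0.
Qed.

Lemma norm12Z [m n] (c : R) (A : 'M[R]_(m, n)) : norm12 (c *: A) = `|c| * norm12 A.
Proof.
rewrite /norm12 (big_endo (fun x => `|c| * x) (fun x y => maxr_pMr x y (normr_ge0 c))).
  2: by rewrite mulr0.
apply: eq_bigr => j _.
rewrite (eq_bigr (fun i => c ^+ 2 * A i j ^+ 2)) => [|i _]; last by rewrite mxE exprMn.
by rewrite -mulr_sumr sqrtrM ?sqr_ge0 // sqrtr_sqr.
Qed.

Lemma norm12_row_mx_le [m n1 n2] (A : 'M[R]_(m, n1)) (B : 'M[R]_(m, n2)) :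
  norm12 (row_mx A B) <= Num.max (norm12 A) (norm12 B).
Proof.
apply: norm12_le => [|j]; first by rewrite le_max norm12_ge0.
have maxA : norm12 A ^+ 2 <= Num.max (norm12 A) (norm12 B) ^+ 2.
  by apply: lerXn2r; rewrite ?nnegrE ?le_max ?lexx ?norm12_ge0.
have maxB : norm12 B ^+ 2 <= Num.max (norm12 A) (norm12 B) ^+ 2.
  by apply: lerXn2r; rewrite ?nnegrE ?le_max ?lexx ?norm12_ge0 ?orbT.
rewrite -(fintype.splitK j); case: (fintype.split j) => j' /=.
- rewrite (eq_bigr (fun i => A i j' ^+ 2)) => [|i _]; last by rewrite row_mxEl.
  exact: le_trans (col_sqr_le_norm12 A j') maxA.
- rewrite (eq_bigr (fun i => B i j' ^+ 2)) => [|i _]; last by rewrite row_mxEr.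
  exact: le_trans (col_sqr_le_norm12 B j') maxB.
Qed.

Lemma norm12_lsubmx_le [m n1 n2] (A : 'M[R]_(m, n1 + n2)) : norm12 (lsubmx A) <= norm12 A.
Proof.
apply: norm12_le => [|j]; first exact: norm12_ge0.
by under eq_bigr do rewrite mxE; exact: col_sqr_le_norm12.
Qed.

Lemma norm12_rsubmx_le [m n1 n2] (A : 'M[R]_(m, n1 + n2)) : norm12 (rsubmx A) <= norm12 A.
Proof.
apply: norm12_le => [|j]; first exact: norm12_ge0.
by under eq_bigr do rewrite mxE; exact: col_sqr_le_norm12.
Qed.

Lemma gamma2_le_factor [k l] [W : 'M[R]_k] [L Rm : 'M[R]_(l, k)] :
  L^T *m Rm = W -> gamma2 W <= norm12 L * norm12 Rm.
Proof.
move=> LR; apply: ge_inf; last by exists l, L, Rm.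
by exists 0 => _ [l' [L' [R' [_ ->]]]]; rewrite mulr_ge0 ?norm12_ge0.
Qed.

Lemma gamma2_gt_factor [k] [W : 'M[R]_k] [x : R] : gamma2 W < x ->
  exists l (L Rm : 'M[R]_(l, k)), L^T *m Rm = W /\ norm12 L * norm12 Rm < x.
Proof.
move=> lt_x.
have ne : ([set y : R | exists l (L Rm : 'M[R]_(l, k)),
             L^T *m Rm = W /\ y = norm12 L * norm12 Rm] !=set0)%classic.
  by exists (norm12 (1%:M : 'M[R]_k) * norm12 W), k, 1%:M, W; rewrite trmx1 mul1mx.
by have [_ [l [L [Rm [LR ->]]]] ltx] := inf_lt ne lt_x; exists l, L, Rm.
Qed.

Lemma gamma2la_le_factor [k l] [W : 'M[R]_k] [L Rm : 'M[R]_(l, k)] [a : R] :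
  (forall i j, `|(L^T *m Rm) i j - W i j| <= a) ->
  (gamma2la l W a <= (norm12 L * norm12 Rm)%:E)%E.
Proof.
move=> near; apply: (@le_trans _ _ (gamma2l l (L^T *m Rm))).
  by apply: ereal_inf_lbound; exists (L^T *m Rm).
by apply: ereal_inf_lbound; exists L, Rm.
Qed.

End Factorizations.

Section Sketch.
Context {R : realType}.

Lemma gram_sketch [n d l : nat] [U : 'M[R]_(d, n)] [del : R] :
  0 < del -> (0 < l)%N -> norm12 U <= 1 ->
  2 * n%:R ^+ 2 * expR (- (l%:R * (7 * del ^+ 2 / 1536))) < 1 ->
  exists V : 'M[R]_(l, n), forall i j, `|(V^T *m V) i j - (U^T *m U) i j| <= del.
Proof.
move=> del0 l0 U1 small.
(* tau = 24 / del turns the cutoff bias 12 / tau into del / 2, and t = del / 96 turns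
   the exponent 2 t^2 3 - t (del / 2) into - 7 del^2 / 1536. *)
set tau := 24 / del; have tau0 : 0 < tau by rewrite divr_gt0.
pose x i := radsum (fun a => U a i).
pose Z (ij : 'I_n * 'I_n) s := cutoff tau (x ij.1 s) * cutoff tau (x ij.2 s).
have unit i : \sum_a U a i ^+ 2 <= 1.
  by apply: le_trans (col_sqr_le_norm12 U i) _; rewrite expr_le1 ?norm12_ge0.
have [S nearS] : exists S : {ffun 'I_l -> {ffun 'I_d -> bool}},
    forall ij, `|mean (fun r => Z ij (S r)) - mean (Z ij)| <= del / 2.
  apply: (exists_sample_near_mean l (Z := Z) (B := tau) (V := 3) (t := del / 96)) => //.
  - exact: card_signs_gt0.
  - move=> ij s; apply: le_trans (normrM_le_mean_sqr _ _) _.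
    have := cutoff_sqr_le_tau tau (x ij.1 s) (ltW tau0).
    have := cutoff_sqr_le_tau tau (x ij.2 s) (ltW tau0); lra.
  - by move=> ij; apply: cutoff_radsum_var.
  - by rewrite divr_ge0 ?(ltW del0).
  - have -> : del / 96 * (2 * tau) = 1 / 2 by rewrite /tau; field; rewrite gt_eqF.
    by [].
  - rewrite card_prod card_ord natrM -expr2.
    by rewrite (_ : _ - _ = - (7 * del ^+ 2 / 1536)) ?mulrN //; field.
exists (\matrix_(r, i) (cutoff tau (x i (S r)) / Num.sqrt l%:R)) => i j.
rewrite !trmx_mulmxE (_ : \sum_r _ = mean (fun r => Z (i, j) (S r))); last first.
  rewrite /mean card_ord mulr_suml; apply: eq_bigr => r _; rewrite !mxE.
  by rewrite mulrACA -invfM -expr2 sqr_sqrtr ?ler0n.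
have bias := cutoff_radsum_bias tau0 (unit i) (unit j).
rewrite (_ : 12 / tau = del / 2) in bias; last by rewrite /tau; field; rewrite gt_eqF.
have := nearS (i, j); rewrite /Z /x /= => sample.
by rewrite [del]splitr; apply: le_trans (ler_distD _ _ _) (lerD sample bias).
Qed.

Lemma sketch_factorization [k d l : nat] [L Rm : 'M[R]_(d, k)] [del : R] :
  0 < norm12 L -> 0 < norm12 Rm -> 0 < del <= 1 -> (0 < l)%N ->
  2 * (k + k)%:R ^+ 2 * expR (- (l%:R * (7 * del ^+ 2 / 1536))) < 1 ->
  exists L' Rm' : 'M[R]_(l, k),
    (forall i j, `|(L'^T *m Rm') i j - (L^T *m Rm) i j| <= norm12 L * norm12 Rm * del)
    /\ norm12 L' * norm12 Rm' <= 2 * (norm12 L * norm12 Rm).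
Proof.
move=> a0 b0 /andP[del0 del1] l0 small.
set a := norm12 L in a0 *; set b := norm12 Rm in b0 *.
pose U := row_mx (a^-1 *: L) (b^-1 *: Rm).
have U1 : norm12 U <= 1.
  apply: le_trans (norm12_row_mx_le _ _) _.
  by rewrite !norm12Z !normfV !gtr0_norm // !mulVf ?gt_eqF // maxxx.
have [V gramV] := gram_sketch del0 l0 U1 small.
have V2 : norm12 V <= Num.sqrt 2.
  apply: norm12_le => [|j]; first exact: sqrtr_ge0.
  have U1sq : norm12 U ^+ 2 <= 1 by rewrite expr_le1 ?norm12_ge0.
  rewrite sqr_sqrtr ?ler0n //; have := gramV j j; rewrite !gram_diag ler_norml => /andP[_].
  by have := col_sqr_le_norm12 U j; lra.
have entry i j : (((a *: lsubmx V)^T *m (b *: rsubmx V)) i j - (L^T *m Rm) i j)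
    = a * b * ((V^T *m V) (lshift k i) (rshift k j) - (U^T *m U) (lshift k i) (rshift k j)).
  rewrite !trmx_mulmxE mulrBr !mulr_sumr; congr (_ - _); apply: eq_bigr => r _.
    by rewrite !mxE; ring.
  by rewrite row_mxEl row_mxEr !mxE; field; rewrite !gt_eqF.
exists (a *: lsubmx V), (b *: rsubmx V); split => [i j|].
  by rewrite entry normrM ger0_norm ?mulr_ge0 ?(ltW a0) ?(ltW b0) // ler_pM2l ?mulr_gt0.
have s2 : Num.sqrt 2 * Num.sqrt 2 = 2 :> R by rewrite -expr2 sqr_sqrtr ?ler0n.
rewrite !norm12Z !gtr0_norm // mulrACA [X in _ <= X]mulrC ler_pM2l ?mulr_gt0 //.
rewrite -s2; apply: ler_pM; rewrite ?norm12_ge0 //.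
- exact: le_trans (norm12_lsubmx_le V) V2.
- exact: le_trans (norm12_rsubmx_le V) V2.
Qed.

End Sketch.

Section SampleSize.
Context {R : realType}.

Lemma ln_nat_ge_half [k : nat] : (2 <= k)%N -> 1 / 2 <= ln (k%:R : R).
Proof.
move=> k2; have K2 : (2 : R) <= k%:R by rewrite ler_nat.
have e_half : expR (1 / 2 : R) <= 2.
  have inv : expR (1 / 2 : R) * expR (- (1 / 2)) = 1 by rewrite -expRD subrr expR0.
  by have := expR_ge1Dx (- (1 / 2) : R); have := expR_gt0 (1 / 2 : R); nra.
rewrite -[X in X <= _](expRK (1 / 2 : R)) ler_ln ?posrE ?expR_gt0 //; lra.
Qed.

Lemma union_bound_lt1 (k l : nat) (del : R) : (2 <= k)%N -> 0 < del ->
  1100 * ln (k%:R : R) / del ^+ 2 < l%:R ->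
  2 * (k + k)%:R ^+ 2 * expR (- (l%:R * (7 * del ^+ 2 / 1536))) < 1.
Proof.
move=> k2 del0 lX; set K : R := k%:R.
have K2 : 2 <= K by rewrite ler_nat.
have lnk := ln_nat_ge_half k2.
have K5 : 0 < K ^+ 5 by rewrite exprn_gt0 //; lra.
(* 1100 * 7 / 1536 > 5, so the failure probability is below 8 / k^3. *)
have exp_lt : expR (- (l%:R * (7 * del ^+ 2 / 1536))) < (K ^+ 5)^-1.
  rewrite -[K in (K ^+ 5)^-1](lnK (_ : K \is Num.pos)) ?posrE; last by lra.
  rewrite -expRM_natl -expRN ltr_expR ltrN2.
  by move: lX; rewrite ltr_pdivrMr ?exprn_gt0 //; lra.
apply: (lt_le_trans (_ : _ < 2 * (k + k)%:R ^+ 2 * (K ^+ 5)^-1)).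
  by rewrite ltr_pM2l // mulr_gt0 // exprn_gt0 // natrD; lra.
rewrite ler_pdivrMr // mul1r natrD -/K.
have K3 : 2 ^+ 3 <= K ^+ 3 by apply: lerXn2r; rewrite ?nnegrE //; lra.
have -> : 2 * (K + K) ^+ 2 = K ^+ 2 * 2 ^+ 3 by ring.
by rewrite (_ : K ^+ 5 = K ^+ 2 * K ^+ 3) ?ler_wpM2l ?sqr_ge0 // -exprD.
Qed.

Lemma exists_sample_size [k : nat] [del : R] : (2 <= k)%N -> 0 < del <= 1 / 2 ->
  exists l : nat, [/\ (0 < l)%N, l%:R <= 2200 * ln (k%:R : R) / del ^+ 2
    & 2 * (k + k)%:R ^+ 2 * expR (- (l%:R * (7 * del ^+ 2 / 1536))) < 1].
Proof.
move=> k2 /andP[del0 del_half]; set X := 1100 * ln (k%:R : R) / del ^+ 2.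
have X1 : 1 <= X.
  have del2 : del ^+ 2 <= 1 by rewrite expr_le1 ?(ltW del0) //; lra.
  have := ln_nat_ge_half k2.
  by rewrite ler_pdivlMr ?exprn_gt0 // mul1r; lra.
have -> : 2200 * ln (k%:R : R) / del ^+ 2 = X + X by rewrite /X; field; rewrite gt_eqF.
exists (Num.truncn X).+1; split; [by [] | | exact: union_bound_lt1 k2 del0 (truncnS_gt X)].
by rewrite -natr1 lerD // truncn_le; lra.
Qed.

End SampleSize.

Theorem mainTheorem6 (R : realType) :
  exists C1 C2 : R, 0 < C1 /\ 0 < C2 /\
  forall (k : nat) (W : 'M[R]_k) (alpha : R),
    (2 <= k)%N -> 0 < alpha -> alpha < gamma2 W ->
    exists l : nat,
      (l%:R <= C1 * gamma2 W ^+ 2 * ln (k%:R : R) / alpha ^+ 2) /\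
      (gamma2la l W alpha <= (C2 * gamma2 W)%:E)%E.
Proof.
exists 8800, 4; split; first lra; split; first lra.
move=> k W alpha k2 alpha0 alpha_lt; set g := gamma2 W.
have g0 : 0 < g := lt_trans alpha0 alpha_lt.
have [d [L [Rm [LR ab_lt]]]] : exists d (L Rm : 'M[R]_(d, k)),
    L^T *m Rm = W /\ norm12 L * norm12 Rm < 2 * g by apply: gamma2_gt_factor; lra.
have g_ab := gamma2_le_factor LR.
have a0 : 0 < norm12 L by have := norm12_ge0 L; have := norm12_ge0 Rm; nra.
have b0 : 0 < norm12 Rm by have := norm12_ge0 L; have := norm12_ge0 Rm; nra.
pose del := alpha / (2 * g).
have del_range : 0 < del <= 1 / 2.
  by rewrite divr_gt0 ?mulr_gt0 //= ler_pdivrMr ?mulr_gt0 //; lra.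
have [l [l0 l_size union]] := exists_sample_size k2 del_range.
have del1 : 0 < del <= 1 by move: del_range => /andP[-> /le_trans]; apply; lra.
have [L' [Rm' [near norms]]] := sketch_factorization a0 b0 del1 l0 union.
have near_alpha i j : `|(L'^T *m Rm') i j - W i j| <= alpha.
  rewrite -LR; apply: le_trans (near i j) _.
  by rewrite /del mulrA ler_pdivrMr ?mulr_gt0 // mulrC ler_pM2l //; lra.
exists l; split.
  suff -> : 8800 * g ^+ 2 * ln (k%:R : R) / alpha ^+ 2 = 2200 * ln (k%:R : R) / del ^+ 2 by [].
  by rewrite /del; field; rewrite !gt_eqF.
apply: le_trans (gamma2la_le_factor near_alpha) _.
by rewrite lee_fin; lra.
Qed.
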